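(* Let $f(t)=1+\sum_{i=1}^{d}f_{i-1}t^i$ and $g(t)=1+\sum_{i=1}^{d'}g_{i-1}t^i$ be $f$-polynomials of simplicial complexes. Then (a) the product $f(t)g(t)$ is the $f$-polynomial of a simplicial complex, and (b) the Hadamard product $f(t)\circ g(t)=1+\sum_{i=1}^{\min\{d,d'\}}f_{i-1}g_{i-1}t^i$ is the $f$-polynomial of a simplicial complex.
   Context: The $f$-polynomial of a simplicial complex is $\sum_{i\ge0}f_{i-1}t^i$, where $f_{i-1}$ is the number of faces of cardinality $i$ (constant term $1$ for the empty face). *)

From HB Require Import structures.
From mathcomp Require Import all_boot all_order all_algebra.
Set Implicit Arguments. Unset Strict Implicit. Unset Printing Implicit Defensive.
Import GRing.Theory.
Local Open Scope ring_scope.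

Definition is_simplicial_complex (n : nat) (D : {set {set 'I_n}}) : Prop :=
  set0 \in D /\ (forall F G : {set 'I_n}, F \in D -> G \subset F -> G \in D).

(* f-polynomial: sum over faces F of t^{|F|} (constant term 1 = empty face). *)
Definition fpoly (n : nat) (D : {set {set 'I_n}}) : {poly int} :=
  \sum_(F in D) 'X^#|F|.

Definition is_fpoly (p : {poly int}) : Prop :=
  exists n (D : {set {set 'I_n}}), is_simplicial_complex D /\ fpoly D = p.

Definition hadamard (p q : {poly int}) : {poly int} :=
  \poly_(i < minn (size p) (size q)) (p`_i * q`_i).

From HB Require Import structures.
From mathcomp Require Import all_boot all_order all_algebra.
Set Implicit Arguments. Unset Strict Implicit. Unset Printing Implicit Defensive.

(* (a) The join of two complexes, on the disjoint union of their vertex sets,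
   has as faces the disjoint unions A + B of faces, so its f-polynomial is the
   product.  (b) On the product of the (ordered) vertex sets, match each pair
   of faces (A, B) of equal cardinality k by the order-preserving bijection
   A -> B, seen as a k-element subset of the product.  A set of pairs arises
   this way iff it is the graph of a strictly increasing map, a property
   inherited by subsets, so these graphs form a complex with k-faces counted
   by f_{k-1} g_{k-1}. *)

Definition is_complex (T : finType) (D : {set {set T}}) : Prop :=
  set0 \in D /\ (forall F G : {set T}, F \in D -> G \subset F -> G \in D).

Definition face_poly (T : finType) (D : {set {set T}}) : {poly int} :=
  (\sum_(F in D) 'X^#|F|)%R.

Lemma is_fpoly_face_poly (T : finType) (D : {set {set T}}) :
  is_complex D -> is_fpoly (face_poly D).
Proof.
move=> [D0 Dsub]; pose relabel (F : {set T}) := enum_rank @: F.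
have relabelK : cancel relabel (fun F : {set 'I_#|T|} => enum_val @: F).
  move=> F; rewrite -imset_comp (eq_imset _ enum_rankK).
  by apply/setP => x; apply/imsetP/idP => [[y yF ->]|xF]; last exists x.
have relabelVK : cancel (fun F : {set 'I_#|T|} => enum_val @: F) relabel.
  move=> F; rewrite /relabel -imset_comp (eq_imset _ enum_valK).
  by apply/setP => x; apply/imsetP/idP => [[y yF ->]|xF]; last exists x.
exists #|T|, (relabel @: D); split; first split.
- by apply/imsetP; exists set0; rewrite // /relabel imset0.
- move=> _ G /imsetP[F FD ->] GF; apply/imsetP.
  exists (enum_val @: G); last by rewrite relabelVK.
  by apply: Dsub FD _; rewrite -[F]relabelK imsetS.
- rewrite /fpoly /face_poly big_imset /=; last exact: in2W (can_inj relabelK).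
  by apply: eq_bigr => F _; rewrite card_imset //; exact: enum_rank_inj.
Qed.

Section Join.
Variables T U : finType.

Definition join_face (p : {set T} * {set U}) : {set T + U} :=
  inl @: p.1 :|: inr @: p.2.

Definition split_face (S : {set T + U}) : {set T} * {set U} :=
  (inl @^-1: S, inr @^-1: S).

Lemma inl_in_inr_imset (x : T) (B : {set U}) : (inl x \in inr @: B) = false.
Proof. by apply/imsetP => -[]. Qed.

Lemma inr_in_inl_imset (y : U) (A : {set T}) : (inr y \in inl @: A) = false.
Proof. by apply/imsetP => -[]. Qed.

Lemma join_faceK : cancel join_face split_face.
Proof.
move=> [A B]; congr pair; apply/setP => x;
  by rewrite !inE ?(mem_imset _ _ (@inl_inj T U)) ?(mem_imset _ _ (@inr_inj T U))
             ?inl_in_inr_imset ?inr_in_inl_imset ?orbF.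
Qed.

Lemma split_faceK : cancel split_face join_face.
Proof.
move=> S; apply/setP => -[x|y];
  by rewrite !inE ?(mem_imset _ _ (@inl_inj T U)) ?(mem_imset _ _ (@inr_inj T U))
             !inE ?inl_in_inr_imset ?inr_in_inl_imset ?orbF.
Qed.

Lemma card_join_face p : #|join_face p| = #|p.1| + #|p.2|.
Proof.
rewrite cardsU !card_imset; [|exact: inr_inj|exact: inl_inj].
suff -> : inl @: p.1 :&: inr @: p.2 = set0 by rewrite cards0 subn0.
by apply/setP => -[x|y]; rewrite !inE ?inl_in_inr_imset ?inr_in_inl_imset ?andbF.
Qed.

Variables (D : {set {set T}}) (E : {set {set U}}).

Lemma join_complex :
  is_complex D -> is_complex E -> is_complex (join_face @: setX D E).
Proof.
move=> [D0 Dsub] [E0 Esub]; split.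
  apply/imsetP; exists (set0, set0); first by rewrite inE D0 E0.
  by rewrite /join_face !imset0 setU0.
move=> _ G /imsetP[[A B] /setXP[AD BE] ->] GAB.
apply/imsetP; exists (split_face G); last by rewrite split_faceK.
have [eA eB] := join_faceK (A, B).
apply/setXP; split; [apply: Dsub AD _; rewrite -eA | apply: Esub BE _; rewrite -eB];
  exact: preimsetS.
Qed.

Lemma face_poly_join :
  face_poly (join_face @: setX D E) = (face_poly D * face_poly E)%R.
Proof.
rewrite /face_poly big_imset /=; last exact: in2W (can_inj join_faceK).
rewrite big_distrlr pair_big_dep /=; apply: eq_big => [[A B]|p _].
  by rewrite inE.
by rewrite card_join_face GRing.exprD.
Qed.

End Join.

Section OrderRank.
Variable n : nat.
Implicit Types (A : {set 'I_n}) (x y : 'I_n).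

Definition ord_rank A x : nat := #|[set a in A | a < x]|.

Lemma ord_rank_le A x y : x <= y -> ord_rank A x <= ord_rank A y.
Proof.
move=> le_xy; apply/subset_leq_card/subsetP => a; rewrite !inE.
by case/andP=> -> /leq_trans->.
Qed.

Lemma ord_rank_lt A x y : x \in A -> x < y -> ord_rank A x < ord_rank A y.
Proof.
move=> xA lt_xy; apply/proper_card/properP; split.
  by apply/subsetP => a; rewrite !inE => /andP[-> /ltn_trans->].
by exists x; rewrite !inE ?xA ?lt_xy ?ltnn.
Qed.

Lemma ord_rank_ltE A x y :
  x \in A -> y \in A -> (ord_rank A x < ord_rank A y) = (x < y).
Proof.
move=> xA yA; apply/idP/idP; last exact: ord_rank_lt.
by apply: contraLR; rewrite -!leqNgt; exact: ord_rank_le.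
Qed.

Lemma ord_rank_inj A : {in A &, injective (ord_rank A)}.
Proof.
move=> x y xA yA e; apply: val_inj.
case: (ltngtP x y) (ord_rank_ltE xA yA) (ord_rank_ltE yA xA) => //;
  by rewrite e ltnn.
Qed.

Lemma ord_rank_lt_card A x : x \in A -> ord_rank A x < #|A|.
Proof.
move=> xA; apply/proper_card/properP; split.
  by apply/subsetP => a; rewrite inE => /andP[].
by exists x; rewrite // !inE ltnn andbF.
Qed.

Lemma ord_rank_onto A k : k < #|A| -> exists2 x, x \in A & ord_rank A x = k.
Proof.
move=> ltkA; pose s := map (ord_rank A) (enum A).
have uniq_s : uniq s.
  by rewrite map_inj_in_uniq ?enum_uniq // => x y; rewrite !mem_enum; exact: ord_rank_inj.
have sub_s : {subset s <= iota 0 #|A|}.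
  move=> i /mapP[x]; rewrite mem_enum mem_iota => /ord_rank_lt_card lt_x ->.
  by rewrite add0n lt_x.
have size_s : size (iota 0 #|A|) <= size s by rewrite size_iota size_map -cardE.
have [_ eq_s] := uniq_min_size uniq_s sub_s size_s.
have /mapP[x] : k \in s by rewrite eq_s mem_iota.
by rewrite mem_enum; exists x.
Qed.

Lemma ord_rank_imset (T : finType) (f : T -> 'I_n) (S : {set T}) x :
  {in S &, injective f} -> ord_rank (f @: S) x = #|[set u in S | f u < x]|.
Proof.
move=> f_inj; rewrite /ord_rank -(card_in_imset (f := f)); last first.
  by move=> u v; rewrite !inE => /andP[uS _] /andP[vS _]; exact: f_inj.
apply: eq_card => a; rewrite inE.
apply/andP/imsetP => [[] | [u]].
  by case/imsetP=> u uS -> lt_ux; exists u; rewrite // inE uS.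
by rewrite inE => /andP[uS lt_ux] ->; rewrite imset_f.
Qed.

End OrderRank.

Section OrderMatching.
Variables n m : nat.
Implicit Types (S : {set 'I_n * 'I_m}) (p : {set 'I_n} * {set 'I_m}).

Definition increasing_graph S : Prop :=
  {in S &, forall u v : 'I_n * 'I_m, (u.1 < v.1) = (u.2 < v.2)}.

Definition order_matching p : {set 'I_n * 'I_m} :=
  [set u | [&& u.1 \in p.1, u.2 \in p.2 & ord_rank p.1 u.1 == ord_rank p.2 u.2]].

Lemma increasing_graphS S S' : increasing_graph S -> S' \subset S -> increasing_graph S'.
Proof. by move=> incS sub u v /(subsetP sub) uS /(subsetP sub); exact: incS. Qed.

Lemma increasing_graph_eq S u v : increasing_graph S -> u \in S -> v \in S ->
  (u.1 == v.1) = (u.2 == v.2).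
Proof.
move=> incS uS vS; have le_eq x y : x \in S -> y \in S -> (x.1 <= y.1) = (x.2 <= y.2).
  by move=> xS yS; rewrite leqNgt (incS y x) // -leqNgt.
by rewrite -!val_eqE /= !eqn_leq (le_eq u v) // (le_eq v u).
Qed.

Lemma increasing_graph_fst_inj S : increasing_graph S -> {in S &, injective fst}.
Proof.
move=> incS u v uS vS eq1; apply/eqP.
by rewrite -pair_eqE /= -(increasing_graph_eq incS uS vS) andbb eq1.
Qed.

Lemma increasing_graph_snd_inj S : increasing_graph S -> {in S &, injective snd}.
Proof.
move=> incS u v uS vS eq2; apply/eqP.
by rewrite -pair_eqE /= (increasing_graph_eq incS uS vS) andbb eq2.
Qed.

Lemma ord_rank_increasing_graph S u : increasing_graph S -> u \in S ->
  ord_rank (fst @: S) u.1 = ord_rank (snd @: S) u.2.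
Proof.
move=> incS uS; rewrite (ord_rank_imset _ (increasing_graph_fst_inj incS)).
rewrite (ord_rank_imset _ (increasing_graph_snd_inj incS)).
by apply: eq_card => v; rewrite !inE; case vS: (v \in S); rewrite //= incS.
Qed.

Lemma increasing_order_matching p : increasing_graph (order_matching p).
Proof.
move=> u v; rewrite !inE => /and3P[u1 u2 /eqP eu] /and3P[v1 v2 /eqP ev].
by rewrite -(ord_rank_ltE u1 v1) -(ord_rank_ltE u2 v2) eu ev.
Qed.

Lemma fst_order_matching p : #|p.1| = #|p.2| -> fst @: order_matching p = p.1.
Proof.
move=> eq_card12; apply/setP => x; apply/imsetP/idP => [[u] | xA].
  by rewrite inE => /and3P[u1 _ _] ->.
have /ord_rank_onto[y yB eq_rank] : ord_rank p.1 x < #|p.2|.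
  by rewrite -eq_card12 ord_rank_lt_card.
by exists (x, y); rewrite // inE xA yB eq_rank /=.
Qed.

Lemma snd_order_matching p : #|p.1| = #|p.2| -> snd @: order_matching p = p.2.
Proof.
move=> eq_card12; apply/setP => y; apply/imsetP/idP => [[u] | yB].
  by rewrite inE => /and3P[_ u2 _] ->.
have /ord_rank_onto[x xA eq_rank] : ord_rank p.2 y < #|p.1|.
  by rewrite eq_card12 ord_rank_lt_card.
by exists (x, y); rewrite // inE xA yB eq_rank /=.
Qed.

Lemma order_matchingE S : increasing_graph S -> order_matching (fst @: S, snd @: S) = S.
Proof.
move=> incS; apply/setP => u; rewrite inE /=; apply/idP/idP; last first.
  by move=> uS; rewrite !imset_f //= ord_rank_increasing_graph.
case/and3P => /imsetP[v vS eq1] u2 /eqP eq_rank.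
have eq2 : u.2 = v.2.
  apply: (ord_rank_inj u2 (imset_f _ vS)).
  by rewrite -eq_rank eq1 ord_rank_increasing_graph.
by rewrite [u]surjective_pairing eq1 eq2 -surjective_pairing.
Qed.

Lemma card_order_matching p : #|p.1| = #|p.2| -> #|order_matching p| = #|p.1|.
Proof.
move=> eq_card12; rewrite -(fst_order_matching eq_card12).
by rewrite (card_in_imset (increasing_graph_fst_inj (@increasing_order_matching p))).
Qed.

Variables (D : {set {set 'I_n}}) (E : {set {set 'I_m}}).

Definition equicard_pairs : {set {set 'I_n} * {set 'I_m}} :=
  [set p in setX D E | #|p.1| == #|p.2|].

Lemma order_matching_complex :
  is_complex D -> is_complex E -> is_complex (order_matching @: equicard_pairs).
Proof.
move=> [D0 Dsub] [E0 Esub]; split.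
  apply/imsetP; exists (set0, set0); first by rewrite !inE D0 E0 !cards0.
  by apply/setP => u; rewrite !inE.
move=> F G /imsetP[p]; rewrite !inE => /andP[/andP[p1D p2E] /eqP eq_card12] -> Gp.
have incG := increasing_graphS (@increasing_order_matching p) Gp.
apply/imsetP; exists (fst @: G, snd @: G); last by rewrite order_matchingE.
rewrite !inE (card_in_imset (increasing_graph_fst_inj incG)).
rewrite (card_in_imset (increasing_graph_snd_inj incG)) eqxx andbT.
apply/andP; split; [apply: Dsub p1D _ | apply: Esub p2E _].
  by rewrite -(fst_order_matching eq_card12) imsetS.
by rewrite -(snd_order_matching eq_card12) imsetS.
Qed.

Lemma face_poly_order_matching :
  face_poly (order_matching @: equicard_pairs) = (\sum_(p in equicard_pairs) 'X^#|p.1|)%R.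
Proof.
rewrite /face_poly big_imset /=.
  by apply: eq_bigr => p; rewrite inE => /andP[_ /eqP /card_order_matching ->].
move=> p q; rewrite !inE => /andP[_ /eqP eq_p] /andP[_ /eqP eq_q] eq_pq.
rewrite [p]surjective_pairing [q]surjective_pairing.
rewrite -(fst_order_matching eq_p) -(snd_order_matching eq_p) eq_pq.
by rewrite (fst_order_matching eq_q) (snd_order_matching eq_q).
Qed.

End OrderMatching.

Import GRing.Theory.
Local Open Scope ring_scope.

Lemma coef_hadamard (p q : {poly int}) i : (hadamard p q)`_i = p`_i * q`_i.
Proof.
rewrite coef_poly; case: ifP => // /negbT; rewrite -leqNgt geq_min.
by case/orP => /(nth_default 0) ->; rewrite ?mul0r ?mulr0.
Qed.

Lemma coef_face_poly (T : finType) (D : {set {set T}}) i :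
  (face_poly D)`_i = \sum_(F in D) (i == #|F|)%:R.
Proof. by rewrite coef_sum; apply: eq_bigr => F _; rewrite coefXn. Qed.

Lemma hadamard_face_poly n m (D : {set {set 'I_n}}) (E : {set {set 'I_m}}) :
  \sum_(p in equicard_pairs D E) 'X^#|p.1| = hadamard (face_poly D) (face_poly E).
Proof.
apply/polyP => i; rewrite coef_hadamard !coef_face_poly coef_sum.
rewrite big_distrlr pair_big_dep big_mkcond [RHS]big_mkcond /=.
apply: eq_bigr => -[A B] _; rewrite !inE coefXn /=.
case: ((A \in D) && (B \in E)) => //=.
case: (eqVneq #|A| #|B|) => [<- | neqAB]; first by case: (i == #|A|); rewrite ?mulr1.
by case: (eqVneq i #|A|) => [-> | _]; rewrite ?(negbTE neqAB) ?mulr0 ?mul0r.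
Qed.

Unset Implicit Arguments.

Theorem proposition4p3 (f g : {poly int}) :
  is_fpoly f -> is_fpoly g -> is_fpoly (f * g) /\ is_fpoly (hadamard f g).
Proof.
move=> [n [D [cD <-]]] [m [E [cE <-]]].
rewrite -[fpoly D]/(face_poly D) -[fpoly E]/(face_poly E); split.
  by rewrite -face_poly_join; exact: is_fpoly_face_poly (join_complex cD cE).
rewrite -hadamard_face_poly -face_poly_order_matching.
exact: is_fpoly_face_poly (order_matching_complex cD cE).
Qed.
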